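(* Let $n>0$ be the degree of freedom and $\eta_0$ a real constant. Let $k,\mu$ be nonzero constants with the same sign. Consider the isenthalpic van der Waals pressure $$p(\rho)=\frac{3\rho\,(n\rho^2+(6-3n)\rho+2\eta_0)}{6+3n-n\rho},\qquad 0<\rho<3,$$ and put $$Q'(\rho)=\frac{k}{\mu}\rho\,p'(\rho)=\frac{6k\rho}{\mu(6+3n-\rho n)^2}\Big(3\eta_0(n+2)+\rho(6-3n)(6+3n)+6n(n+1)\rho^2-n^2\rho^3\Big).$$ Let $C_1\neq0$ and $C_2$ be real constants, let $J\subset(0,3)$ be an open interval on which $C_1\rho+C_2\neq0$, and let $G$ be an antiderivative of $\frac{Q'(\rho)}{C_1(C_1\rho+C_2)}$ on $J$. If $$\eta_0>\frac{2(n-2)^2(2n+5)}{3n(n+2)},$$ then $G$ is invertible on $J$.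
   Context: The van der Waals gas (in reduced units) has state equations $p=\frac{8T}{3v-1}-\frac{3}{v^2}$ and $e=\frac{4n}{3}T-\frac{3}{v}$, where $v=\rho^{-1}>1/3$ is the specific volume (so $0<\rho<3$), $T$ is the temperature, $e$ is the specific energy and $n$ is the degree of freedom. An isenthalpic process is one with specific enthalpy $\eta=e+p\rho^{-1}$ equal to the constant $\eta_0$; along it, $p$ as a function of $\rho$ is given by the displayed formula. The permeability $k$ and viscosity $\mu$ are constants. *)

From Stdlib Require Import Reals Lra.
From Coquelicot Require Import Coquelicot.
Open Scope R_scope.

Definition p_isen (n eta0 rho : R) : R :=
  3 * rho * (n * rho ^ 2 + (6 - 3 * n) * rho + 2 * eta0) / (6 + 3 * n - n * rho).

Definition Qprime (n eta0 k mu rho : R) : R :=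
  k / mu * rho * Derive (p_isen n eta0) rho.

(** By the mean value theorem, a function whose derivative never vanishes on an
    interval is injective there, so it suffices that [G' = Q' / (C1 (C1 rho + C2))]
    has no zero on [J].  Since [k/mu > 0] and [rho > 0], the sign of [Q'] is that of
    the cubic factor of [p'], and [n] times this cubic equals
    [3 n (n+2) eta0 - 2 (n-2)^2 (2n+5) + (n rho - n + 2)^2 (4n + 10 - n rho)]:
    the first term is positive exactly under the hypothesis on [eta0], and the
    second is nonnegative for [rho < 3]. *)
From Stdlib Require Import Reals Lra Psatz.
From Coquelicot Require Import Coquelicot.
Open Scope R_scope.

Lemma is_derive_neq0_injective (f f' : R -> R) (a b : R) :
  (forall x, a < x < b -> is_derive f x (f' x)) ->
  (forall x, a < x < b -> f' x <> 0) ->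
  forall x y, a < x < b -> a < y < b -> f x = f y -> x = y.
Proof.
  intros Hf Hf' x y Hx Hy Hxy.
  destruct (Req_dec x y) as [|Hne]; [assumption|exfalso].
  assert (Hin : forall c, Rmin x y <= c <= Rmax x y -> a < c < b).
  { intros c Hc; unfold Rmin, Rmax in Hc; destruct (Rle_dec x y); lra. }
  destruct (MVT_gen f x y f') as [c [Hc Hmvt]].
  - intros z Hz; apply Hf, Hin; lra.
  - intros z Hz; apply continuity_pt_filterlim.
    apply (ex_derive_continuous (V := R_NormedModule)).
    eexists; apply Hf, Hin, Hz.
  - rewrite Hxy, Rminus_diag in Hmvt; symmetry in Hmvt.
    apply (Hf' c (Hin c Hc)).
    apply Rmult_integral in Hmvt as [|]; lra.
Qed.

Definition vdw_cubic (n eta0 rho : R) : R :=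
  3 * eta0 * (n + 2) + rho * (6 - 3 * n) * (6 + 3 * n)
  + 6 * n * (n + 1) * rho ^ 2 - n ^ 2 * rho ^ 3.

Lemma Derive_p_isen (n eta0 rho : R) :
  0 < n -> 0 < rho < 3 ->
  Derive (p_isen n eta0) rho = 6 / (6 + 3 * n - n * rho) ^ 2 * vdw_cubic n eta0 rho.
Proof.
  intros Hn Hrho.
  assert (Hden : 6 + 3 * n - n * rho > 0) by nra.
  apply is_derive_unique; unfold p_isen, vdw_cubic.
  auto_derive; [lra | field; lra].
Qed.

Lemma vdw_cubic_pos (n eta0 rho : R) :
  0 < n -> 0 < rho < 3 ->
  eta0 > 2 * (n - 2) ^ 2 * (2 * n + 5) / (3 * n * (n + 2)) ->
  0 < vdw_cubic n eta0 rho.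
Proof.
  intros Hn Hrho Heta.
  assert (Hexcess : 0 < 3 * n * (n + 2) * eta0 - 2 * (n - 2) ^ 2 * (2 * n + 5)).
  { apply Rlt_0_minus.
    apply (Rmult_lt_reg_r (/ (3 * n * (n + 2)))); [apply Rinv_0_lt_compat; nra|].
    replace (3 * n * (n + 2) * eta0 * / (3 * n * (n + 2))) with eta0 by (field; lra).
    exact Heta. }
  assert (Hsquare : 0 <= (n * rho - n + 2) ^ 2 * (4 * n + 10 - n * rho)).
  { apply Rmult_le_pos; [apply pow2_ge_0 | nra]. }
  assert (Hid : n * vdw_cubic n eta0 rho
    = (3 * n * (n + 2) * eta0 - 2 * (n - 2) ^ 2 * (2 * n + 5))
      + (n * rho - n + 2) ^ 2 * (4 * n + 10 - n * rho))
    by (unfold vdw_cubic; ring).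
  nra.
Qed.

Lemma Qprime_pos (n eta0 k mu rho : R) :
  0 < n -> mu <> 0 -> 0 < k * mu -> 0 < rho < 3 ->
  eta0 > 2 * (n - 2) ^ 2 * (2 * n + 5) / (3 * n * (n + 2)) ->
  0 < Qprime n eta0 k mu rho.
Proof.
  intros Hn Hmu Hkmu Hrho Heta.
  unfold Qprime; rewrite Derive_p_isen by assumption.
  assert (Hkm : 0 < k / mu).
  { replace (k / mu) with (k * mu / (mu * mu)) by (field; lra).
    apply Rdiv_lt_0_compat; nra. }
  assert (Hfactor : 0 < 6 / (6 + 3 * n - n * rho) ^ 2).
  { apply Rdiv_lt_0_compat; [lra | apply pow_lt; nra]. }
  pose proof (vdw_cubic_pos n eta0 rho Hn Hrho Heta).
  apply Rmult_lt_0_compat; apply Rmult_lt_0_compat; lra.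
Qed.

Theorem mainTheorem3
  (n eta0 k mu C1 C2 a b : R) (G : R -> R)
  (Hn : 0 < n)
  (Hk : k <> 0) (Hmu : mu <> 0) (Hsign : 0 < k * mu)
  (HC1 : C1 <> 0)
  (Hab : a < b) (Ha : 0 <= a) (Hb : b <= 3)
  (HJ : forall rho, a < rho < b -> C1 * rho + C2 <> 0)
  (HG : forall rho, a < rho < b ->
          is_derive G rho (Qprime n eta0 k mu rho / (C1 * (C1 * rho + C2))))
  (Heta : eta0 > 2 * (n - 2) ^ 2 * (2 * n + 5) / (3 * n * (n + 2))) :
  forall x y, a < x < b -> a < y < b -> G x = G y -> x = y.
Proof.
  apply (is_derive_neq0_injective G _ a b HG).
  intros rho Hrho.
  pose proof (Qprime_pos n eta0 k mu rho Hn Hmu Hsign ltac:(lra) Heta).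
  unfold Rdiv; apply Rmult_integral_contrapositive; split; [lra|].
  apply Rinv_neq_0_compat, Rmult_integral_contrapositive; auto.
Qed.
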